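(* Let $\sigma$ be irrational and $\rho\in\mathbb R$, and let $b[n]=\{\sigma n+\rho\}$ for $n\ge0$, where $\{\cdot\}$ denotes the fractional part. Then $(b[n])_{n\ge0}$ is a canonical sequence (so the permutation it represents is ergodic), and it is a fixed point of the morphism $[0,1]^*\to[0,1]^*$ defined on single numbers by $x\mapsto \{2x-\rho\},\{2x-\rho+\sigma\}$ and extended by concatenation.
   Context: A real sequence $(a[i])_{i\ge0}$ is canonical if its elements are pairwise distinct, lie in $[0,1]$, and for every $t\in[0,1]$, $\#\{0\le k<n: a[j+k]<t\}/n\to t$ as $n\to\infty$ uniformly in $j$. An infinite permutation is an equivalence class of real sequences with pairwise distinct elements under $(a[n])\sim(b[n])$ iff $a[i]<a[j]\Leftrightarrow b[i]<b[j]$ for all $i,j$; it is ergodic if it has a canonical representative. A fixed point of a morphism $\psi$ on sequences of numbers is an infinite sequence $s$ with $\psi(s)=s$, where $\psi$ acts on an infinite sequence by concatenating the images of its terms. *)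

From Stdlib Require Import Reals Lra Lia List.
Open Scope R_scope.

Definition frac (x : R) : R := frac_part x.

Definition irrational (x : R) : Prop :=
  ~ exists (p q : Z), q <> 0%Z /\ x = IZR p / IZR q.

Fixpoint count_below (a : nat -> R) (t : R) (j n : nat) : nat :=
  match n with
  | O => O
  | S n' => (count_below a t j n' +
             (if Rlt_dec (a (j + n')%nat) t then 1 else 0))%nat
  end.

Definition canonical (a : nat -> R) : Prop :=
  (forall i j : nat, i <> j -> a i <> a j) /\
  (forall i : nat, 0 <= a i <= 1) /\
  (forall t : R, 0 <= t <= 1 ->
     forall eps : R, eps > 0 ->
       exists N : nat, forall n j : nat, (n >= N)%nat -> (n > 0)%nat ->
         Rabs (INR (count_below a t j n) / INR n - t) < eps).

Fixpoint prefix_len {A : Type} (f : nat -> list A) (i : nat) : nat :=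
  match i with
  | O => O
  | S i' => (prefix_len f i' + length (f i'))%nat
  end.

(* t is the infinite concatenation f 0 ++ f 1 ++ f 2 ++ ...
   (this determines t entirely when all f i are non-empty). *)
Definition is_concat (f : nat -> list R) (t : nat -> R) : Prop :=
  forall i k : nat, (k < length (f i))%nat ->
    t (prefix_len f i + k)%nat = nth k (f i) 0.

Definition fixed_point_of_morphism (psi : R -> list R) (s : nat -> R) : Prop :=
  (forall x, psi x <> nil) /\ is_concat (fun i => psi (s i)) s.

(* Distinctness of the terms is the irrationality of sigma.  For uniform distribution,
   Dirichlet's pigeonhole argument gives m, p with 0 < d := m sigma - p < eps.  Along each
   residue class mod m the points sigma n + rho are, mod 1, an arithmetic progression of
   step d, and writing the indicator of {y} < t as floor y - floor (y - t) shows that K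
   consecutive terms of such a progression hit [0, t) t K + O(d K + 1/d) times: between
   shifts by h d and (h+1) d, with h d <= t < (h+1) d, the floors telescope.  The
   fixed-point property holds because {2 {y} + c} = {2 y + c}, so the image of b[n] is
   b[2n], b[2n+1]. *)
From Stdlib Require Import Reals List Lra Lia ZArith Classical.
Open Scope R_scope.

Lemma Rabs_le_inv (a b : R) : Rabs a <= b -> - b <= a <= b.
Proof. pose proof (Rle_abs a); pose proof (Rle_abs (- a)); rewrite Rabs_Ropp in *; lra. Qed.

Lemma Int_part_bounds (y : R) : IZR (Int_part y) <= y < IZR (Int_part y) + 1.
Proof. destruct (base_Int_part y); lra. Qed.

Lemma Int_part_eq (y : R) (z : Z) : IZR z <= y < IZR z + 1 -> Int_part y = z.
Proof. intros Hz; symmetry; apply Int_part_spec; lra. Qed.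

Lemma Int_part_add_IZR (y : R) (z : Z) : Int_part (y + IZR z) = (Int_part y + z)%Z.
Proof.
  apply Int_part_eq; rewrite plus_IZR; pose proof (Int_part_bounds y); lra.
Qed.

Lemma Int_part_le_compat (y y' : R) : y <= y' -> IZR (Int_part y) <= IZR (Int_part y').
Proof.
  intros Hy; pose proof (Int_part_bounds y); pose proof (Int_part_bounds y').
  assert (Hlt : (Int_part y < Int_part y' + 1)%Z).
  { apply lt_IZR; rewrite plus_IZR; simpl; lra. }
  apply IZR_le; lia.
Qed.

Lemma Int_part_sub_near (y D : R) : Rabs (IZR (Int_part (y + D)) - IZR (Int_part y) - D) <= 1.
Proof.
  pose proof (Int_part_bounds y); pose proof (Int_part_bounds (y + D)).
  apply Rabs_le; lra.
Qed.

Lemma exists_nat_floor (r : R) : 0 <= r -> exists h : nat, INR h <= r < INR h + 1.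
Proof.
  intros Hr; exists (Z.to_nat (Int_part r)).
  assert (Hpos : (0 <= Int_part r)%Z).
  { apply le_IZR; pose proof (Int_part_le_compat 0 r Hr).
    rewrite (Int_part_eq 0 0) in H by (simpl; lra); exact H. }
  rewrite INR_IZR_INZ, Z2Nat.id by exact Hpos; apply Int_part_bounds.
Qed.

Lemma exists_nat_quotient (t d : R) : 0 <= t -> 0 < d ->
  exists h : nat, INR h * d <= t < (INR h + 1) * d.
Proof.
  intros Ht Hd.
  destruct (exists_nat_floor (t / d)) as [h [Hh1 Hh2]].
  { apply Rmult_le_pos; [lra | left; apply Rinv_0_lt_compat; lra]. }
  exists h; split.
  - apply Rmult_le_compat_r with (r := d) in Hh1; [|lra].
    unfold Rdiv in Hh1; rewrite Rmult_assoc, Rinv_l in Hh1 by lra; lra.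
  - apply Rmult_lt_compat_r with (r := d) in Hh2; [|lra].
    unfold Rdiv in Hh2; rewrite Rmult_assoc, Rinv_l in Hh2 by lra; lra.
Qed.

Lemma frac_bounds (y : R) : 0 <= frac y < 1.
Proof. destruct (base_fp y); unfold frac; lra. Qed.

Lemma frac_add_IZR (y : R) (z : Z) : frac (y + IZR z) = frac y.
Proof. unfold frac, frac_part; rewrite Int_part_add_IZR, plus_IZR; ring. Qed.

Lemma frac_double (y c : R) : frac (2 * frac y + c) = frac (2 * y + c).
Proof.
  replace (2 * y + c) with (2 * frac y + c + IZR (2 * Int_part y)).
  - now rewrite frac_add_IZR.
  - unfold frac, frac_part; rewrite mult_IZR; simpl; ring.
Qed.

Lemma irrational_mul_neq (sigma : R) (m : nat) (p : Z) :
  irrational sigma -> (1 <= m)%nat -> INR m * sigma <> IZR p.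
Proof.
  intros Hs Hm E; apply Hs; exists p, (Z.of_nat m); split; [lia|].
  rewrite <- INR_IZR_INZ, <- E; field; apply not_0_INR; lia.
Qed.

Fixpoint sumR (f : nat -> R) (n : nat) : R :=
  match n with O => 0 | S n' => sumR f n' + f n' end.

Lemma sumR_ext (f g : nat -> R) (n : nat) :
  (forall i, (i < n)%nat -> f i = g i) -> sumR f n = sumR g n.
Proof.
  induction n as [|n IH]; intros Hfg; simpl; [reflexivity|].
  rewrite IH by (intros; apply Hfg; lia); rewrite Hfg by lia; reflexivity.
Qed.

Lemma sumR_add (f g : nat -> R) (n : nat) :
  sumR (fun i => f i + g i) n = sumR f n + sumR g n.
Proof. induction n as [|n IH]; simpl; [lra|]; rewrite IH; ring. Qed.

Lemma sumR_le (f g : nat -> R) (n : nat) :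
  (forall i, (i < n)%nat -> f i <= g i) -> sumR f n <= sumR g n.
Proof.
  induction n as [|n IH]; intros Hfg; simpl; [lra|].
  assert (f n <= g n) by (apply Hfg; lia).
  assert (sumR f n <= sumR g n) by (apply IH; intros; apply Hfg; lia).
  lra.
Qed.

Lemma sumR_near_const (f : nat -> R) (n : nat) (c e : R) :
  (forall i, (i < n)%nat -> Rabs (f i - c) <= e) ->
  Rabs (sumR f n - INR n * c) <= INR n * e.
Proof.
  induction n as [|n IH]; intros Hf.
  - simpl; rewrite Rmult_0_l, Rminus_0_r, Rabs_R0; lra.
  - cbn [sumR]; rewrite S_INR.
    replace (sumR f n + f n - (INR n + 1) * c) with
      ((sumR f n - INR n * c) + (f n - c)) by ring.
    eapply Rle_trans; [apply Rabs_triang|].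
    assert (Rabs (sumR f n - INR n * c) <= INR n * e) by (apply IH; intros; apply Hf; lia).
    assert (Rabs (f n - c) <= e) by (apply Hf; lia).
    lra.
Qed.

Lemma sumR_app (f : nat -> R) (a b : nat) :
  sumR f (a + b) = sumR f a + sumR (fun i => f (a + i)%nat) b.
Proof.
  induction b as [|b IH]; simpl.
  - rewrite Nat.add_0_r; ring.
  - rewrite Nat.add_succ_r; simpl; rewrite IH; ring.
Qed.

Lemma sumR_blocks (f : nat -> R) (m q : nat) :
  sumR f (m * q) = sumR (fun r => sumR (fun k => f (r + m * k)%nat) q) m.
Proof.
  induction q as [|q IH].
  - rewrite Nat.mul_0_r; simpl.
    induction m as [|m IHm]; simpl; [reflexivity|]; rewrite <- IHm; ring.
  - rewrite Nat.mul_succ_r, sumR_app, IH; simpl; rewrite sumR_add.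
    f_equal; apply sumR_ext; intros i _; f_equal; lia.
Qed.

Lemma sumR_telescope (g : nat -> R) (K : nat) :
  sumR (fun k => g (S k) - g k) K = g K - g O.
Proof. induction K as [|K IH]; simpl; [ring|]; rewrite IH; ring. Qed.

Lemma sumR_shift_sub (F : nat -> R) (a K : nat) :
  sumR (fun k => F (k + a)%nat - F k) K = sumR (fun i => F (i + K)%nat - F i) a.
Proof.
  induction a as [|a IH]; simpl.
  - induction K as [|K IHK]; simpl; [reflexivity|].
    rewrite IHK, Nat.add_0_r; ring.
  - rewrite <- IH.
    transitivity (sumR (fun k => (F (k + a)%nat - F k) + (F (S (k + a)) - F (k + a)%nat)) K).
    { apply sumR_ext; intros k _; rewrite Nat.add_succ_r; ring. }
    rewrite sumR_add, (sumR_telescope (fun k => F (k + a)%nat)); simpl.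
    replace (a + K)%nat with (K + a)%nat by lia; ring.
Qed.

Definition frac_lt_ind (t y : R) : R := IZR (Int_part y) - IZR (Int_part (y - t)).

Lemma frac_lt_indE (t y : R) :
  0 <= t <= 1 -> (if Rlt_dec (frac y) t then 1 else 0) = frac_lt_ind t y.
Proof.
  intros Ht; unfold frac_lt_ind, frac, frac_part; pose proof (Int_part_bounds y).
  destruct Rlt_dec.
  - rewrite (Int_part_eq (y - t) (Int_part y - 1)); rewrite ?minus_IZR; lra.
  - rewrite (Int_part_eq (y - t) (Int_part y)); lra.
Qed.

Lemma frac_lt_ind_near (t y : R) : 0 <= t <= 1 -> Rabs (frac_lt_ind t y - t) <= 1.
Proof. intros Ht; rewrite <- frac_lt_indE by exact Ht; apply Rabs_le; destruct Rlt_dec; lra. Qed.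

Lemma frac_lt_ind_add_IZR (t y : R) (z : Z) : frac_lt_ind t (y + IZR z) = frac_lt_ind t y.
Proof.
  unfold frac_lt_ind; replace (y + IZR z - t) with (y - t + IZR z) by ring.
  rewrite !Int_part_add_IZR, !plus_IZR; ring.
Qed.

Lemma sumR_floor_shift (y d : R) (a K : nat) :
  Rabs (sumR (fun k => IZR (Int_part (y + INR (k + a) * d)) - IZR (Int_part (y + INR k * d))) K
        - INR a * (INR K * d)) <= INR a.
Proof.
  rewrite (sumR_shift_sub (fun i => IZR (Int_part (y + INR i * d)))).
  rewrite <- (Rmult_1_r (INR a)) at 2; apply sumR_near_const; intros i _.
  replace (y + INR (i + K) * d) with (y + INR i * d + INR K * d) by (rewrite plus_INR; ring).
  apply Int_part_sub_near.
Qed.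

Lemma ap_count_estimate (t d x : R) (K : nat) : 0 <= t <= 1 -> 0 < d ->
  Rabs (sumR (fun k => frac_lt_ind t (x + INR k * d)) K - t * INR K) <= d * INR K + / d + 1.
Proof.
  intros Ht Hd.
  destruct (exists_nat_quotient t d) as [h Hhd]; [lra | exact Hd|].
  assert (Hh : INR h <= / d).
  { apply Rmult_le_reg_r with d; [lra|]; rewrite Rinv_l by lra; lra. }
  (* Shifting by [t] lies between shifting by [h d] and by [(h+1) d], and shifts by
     multiples of [d] telescope along the progression. *)
  set (gap := fun j k => IZR (Int_part (x - INR j * d + INR (k + j) * d))
                         - IZR (Int_part (x - INR j * d + INR k * d))).
  assert (Hgap : forall j k s, s = INR j * d ->
            gap j k = IZR (Int_part (x + INR k * d)) - IZR (Int_part (x + INR k * d - s))).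
  { intros j k s ->; unfold gap.
    replace (x - INR j * d + INR (k + j) * d) with (x + INR k * d) by (rewrite plus_INR; ring).
    replace (x - INR j * d + INR k * d) with (x + INR k * d - INR j * d) by ring.
    reflexivity. }
  assert (Hsand : forall k, gap h k <= frac_lt_ind t (x + INR k * d) <= gap (S h) k).
  { intros k; unfold frac_lt_ind; rewrite (Hgap h k _ eq_refl), (Hgap (S h) k _ eq_refl), S_INR.
    split; apply Rplus_le_compat_l, Ropp_le_contravar, Int_part_le_compat; lra. }
  assert (Hlo : sumR (gap h) K <= sumR (fun k => frac_lt_ind t (x + INR k * d)) K)
    by (apply sumR_le; intros; apply Hsand).
  assert (Hup : sumR (fun k => frac_lt_ind t (x + INR k * d)) K <= sumR (gap (S h)) K)
    by (apply sumR_le; intros; apply Hsand).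
  pose proof (sumR_floor_shift (x - INR h * d) d h K) as Eh.
  pose proof (sumR_floor_shift (x - INR (S h) * d) d (S h) K) as ESh.
  apply Rabs_le_inv in Eh, ESh; unfold gap in Hlo, Hup; rewrite S_INR in ESh, Hup.
  assert (HK : 0 <= INR K) by apply pos_INR.
  assert (INR h * (INR K * d) >= (t - d) * INR K) by nra.
  assert ((INR h + 1) * (INR K * d) <= (t + d) * INR K) by nra.
  apply Rabs_le; lra.
Qed.

Lemma pigeonhole (K : nat) (f : nat -> nat) :
  (forall i, (i <= K)%nat -> (f i < K)%nat) ->
  exists i j, (i < j <= K)%nat /\ f i = f j.
Proof.
  intros Hf; apply NNPP; intros Hcoll.
  assert (Hnd : NoDup (map f (seq 0 (S K)))).
  { apply NoDup_map_NoDup_ForallPairs; [|apply seq_NoDup].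
    intros i j Hi Hj Eij; apply in_seq in Hi, Hj.
    destruct (Nat.lt_total i j) as [Hlt|[Heq|Hgt]]; [|exact Heq|];
      exfalso; apply Hcoll; [exists i, j | exists j, i]; split; auto; lia. }
  apply NoDup_incl_length with (l' := seq 0 K) in Hnd.
  - rewrite length_map, !length_seq in Hnd; lia.
  - intros y Hy; apply in_map_iff in Hy as [i [<- Hi]]; apply in_seq in Hi.
    apply in_seq; specialize (Hf i); lia.
Qed.

Lemma dirichlet_approximation (sigma delta : R) : 0 < delta ->
  exists (m : nat) (p : Z), (1 <= m)%nat /\ Rabs (INR m * sigma - IZR p) < delta.
Proof.
  intros Hdelta.
  destruct (INR_unbounded (Rmax 1 (/ delta))) as [K HK].
  pose proof (Rmax_l 1 (/ delta)); pose proof (Rmax_r 1 (/ delta)).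
  set (a := fun i : nat => frac (sigma * INR i)).
  set (bin := fun i => Int_part (INR K * a i)).
  assert (Hbin : forall i, (0 <= bin i < Z.of_nat K)%Z).
  { intros i; pose proof (frac_bounds (sigma * INR i)); pose proof (Int_part_bounds (INR K * a i)).
    assert (Hb : (-1 < bin i < Z.of_nat K)%Z).
    { unfold bin, a in *; split; apply lt_IZR; rewrite ?opp_IZR, <- ?INR_IZR_INZ; simpl; nra. }
    lia. }
  destruct (pigeonhole K (fun i => Z.to_nat (bin i))) as [i [j [Hij Eij]]].
  { intros i _; specialize (Hbin i); lia. }
  assert (Ebin : bin i = bin j) by (pose proof (Hbin i); pose proof (Hbin j); lia).
  assert (Hclose : Rabs (INR K * (a j - a i)) < 1).
  { pose proof (Int_part_bounds (INR K * a i)); pose proof (Int_part_bounds (INR K * a j)).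
    unfold bin in Ebin; rewrite Ebin in *; apply Rabs_def1; lra. }
  exists (j - i)%nat, (Int_part (sigma * INR j) - Int_part (sigma * INR i))%Z; split; [lia|].
  replace (INR (j - i) * sigma - IZR (Int_part (sigma * INR j) - Int_part (sigma * INR i)))
    with (a j - a i) by (unfold a, frac, frac_part; rewrite minus_INR, minus_IZR by lia; ring).
  rewrite Rabs_mult, (Rabs_pos_eq (INR K)) in Hclose by apply pos_INR.
  apply Rmult_lt_reg_l with (INR K); [lra|].
  apply Rlt_le_trans with 1; [exact Hclose|].
  apply Rmult_le_reg_r with (/ delta); [now apply Rinv_0_lt_compat|].
  rewrite Rmult_assoc, Rinv_r, Rmult_1_l, Rmult_1_r by lra; lra.
Qed.

Lemma irrational_approximation_pos (sigma delta : R) : irrational sigma -> 0 < delta ->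
  exists (m : nat) (p : Z), (1 <= m)%nat /\ 0 < INR m * sigma - IZR p < delta.
Proof.
  intros Hs Hdelta.
  destruct (dirichlet_approximation sigma (Rmin delta 1)) as [m [p [Hm Happ]]].
  { apply Rmin_pos; lra. }
  pose proof (Rmin_l delta 1); pose proof (Rmin_r delta 1).
  pose proof (irrational_mul_neq sigma m p Hs Hm).
  destruct (Rlt_dec 0 (INR m * sigma - IZR p)) as [Hpos|Hneg].
  { exists m, p; split; [exact Hm|]; rewrite Rabs_pos_eq in Happ by lra; lra. }
  (* A small negative error [-c] is turned into the positive error [1 - h c < c] of the
     [h]-th multiple, where [h = floor (1/c)]. *)
  set (c := IZR p - INR m * sigma).
  assert (Hc : 0 < c < Rmin delta 1) by (rewrite Rabs_left in Happ by lra; unfold c; lra).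
  destruct (exists_nat_quotient 1 c) as [h Hhc]; [lra | lra |].
  assert (Hh : (1 <= h)%nat) by (destruct h; [simpl in Hhc; lra | lia]).
  exists (h * m)%nat, (Z.of_nat h * p - 1)%Z; split; [nia|].
  replace (INR (h * m) * sigma - IZR (Z.of_nat h * p - 1)) with (1 - INR h * c)
    by (unfold c; rewrite mult_INR, minus_IZR, mult_IZR, <- INR_IZR_INZ; simpl; ring).
  assert (1 - INR h * c <> 0).
  { intros E; apply (irrational_mul_neq sigma (h * m) (Z.of_nat h * p - 1) Hs ltac:(nia)).
    unfold c in E; rewrite mult_INR, minus_IZR, mult_IZR, <- INR_IZR_INZ; simpl; lra. }
  lra.
Qed.

Lemma count_below_sumR (a : nat -> R) (t : R) (j n : nat) :
  INR (count_below a t j n) = sumR (fun i => if Rlt_dec (a (j + i)%nat) t then 1 else 0) n.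
Proof.
  induction n as [|n IH]; [reflexivity|].
  cbn [count_below sumR]; rewrite plus_INR, IH; destruct Rlt_dec; reflexivity.
Qed.

Lemma frac_affine_discrepancy (sigma rho t : R) (m : nat) (p : Z) (j n : nat) :
  0 <= t <= 1 -> (1 <= m)%nat -> 0 < INR m * sigma - IZR p ->
  Rabs (sumR (fun i => frac_lt_ind t (sigma * INR (j + i) + rho)) n - t * INR n)
  <= (INR m * sigma - IZR p) * INR n + INR m * (/ (INR m * sigma - IZR p) + 2).
Proof.
  intros Ht Hm Hd.
  set (d := INR m * sigma - IZR p) in *.
  set (g := fun i => frac_lt_ind t (sigma * INR (j + i) + rho)).
  set (q := (n / m)%nat); set (r := (n mod m)%nat).
  assert (Hn : n = (m * q + r)%nat) by (apply Nat.div_mod; lia).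
  assert (Hr : (r < m)%nat) by (apply Nat.mod_upper_bound; lia).
  assert (Hblock : forall r', (r' < m)%nat ->
            Rabs (sumR (fun k => g (r' + m * k)%nat) q - t * INR q) <= d * INR q + / d + 1).
  { intros r' _.
    replace (sumR (fun k => g (r' + m * k)%nat) q)
      with (sumR (fun k => frac_lt_ind t (sigma * INR (j + r') + rho + INR k * d)) q).
    { now apply ap_count_estimate. }
    apply sumR_ext; intros k _; unfold g, d.
    rewrite <- (frac_lt_ind_add_IZR t _ (Z.of_nat k * p)); f_equal.
    rewrite mult_IZR, <- INR_IZR_INZ, !plus_INR, mult_INR; ring. }
  assert (Hblocks := sumR_near_const _ m _ _ Hblock).
  assert (Hrest : Rabs (sumR (fun i => g (m * q + i)%nat) r - INR r * t) <= INR r * 1).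
  { apply sumR_near_const; intros i _; apply frac_lt_ind_near, Ht. }
  rewrite <- sumR_blocks in Hblocks.
  apply Rabs_le_inv in Hblocks, Hrest.
  assert (Hsplit : sumR g n = sumR g (m * q) + sumR (fun i => g (m * q + i)%nat) r)
    by (rewrite Hn at 1; apply sumR_app).
  assert (HnR : INR n = INR m * INR q + INR r) by (rewrite Hn, plus_INR, mult_INR; reflexivity).
  assert (Hrm : INR r <= INR m) by (apply le_INR; lia).
  assert (0 <= INR q) by apply pos_INR.
  assert (0 <= INR r) by apply pos_INR.
  assert (0 < / d) by (apply Rinv_0_lt_compat; exact Hd).
  fold g; rewrite Hsplit, HnR; apply Rabs_le; split; nra.
Qed.

Lemma frac_affine_equidistributed (sigma rho t eps : R) :
  irrational sigma -> 0 <= t <= 1 -> eps > 0 ->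
  exists N : nat, forall n j : nat, (n >= N)%nat -> (n > 0)%nat ->
    Rabs (INR (count_below (fun n => frac (sigma * INR n + rho)) t j n) / INR n - t) < eps.
Proof.
  intros Hs Ht Heps.
  destruct (irrational_approximation_pos sigma (eps / 2) Hs) as [m [p [Hm Hd]]]; [lra|].
  set (d := INR m * sigma - IZR p) in Hd.
  set (C := INR m * (/ d + 2)).
  destruct (INR_unbounded (2 * C / eps)) as [N HN].
  exists N; intros n j Hn Hn0.
  assert (HnR : INR N <= INR n) by (apply le_INR; lia).
  assert (Hn0R : 0 < INR n) by (apply lt_0_INR; lia).
  assert (HC : C < eps / 2 * INR n).
  { apply Rmult_lt_reg_r with (2 / eps); [apply Rdiv_lt_0_compat; lra|].
    replace (eps / 2 * INR n * (2 / eps)) with (INR n) by (field; lra).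
    replace (C * (2 / eps)) with (2 * C / eps) by (field; lra); lra. }
  pose proof (frac_affine_discrepancy sigma rho t m p j n Ht Hm (proj1 Hd)) as Hdisc.
  fold d C in Hdisc.
  rewrite count_below_sumR.
  erewrite sumR_ext by (intros i _; apply frac_lt_indE, Ht).
  replace (_ / INR n - t)
    with ((sumR (fun i => frac_lt_ind t (sigma * INR (j + i) + rho)) n - t * INR n) / INR n)
    by (field; lra).
  unfold Rdiv; rewrite Rabs_mult, Rabs_inv, (Rabs_pos_eq (INR n)) by lra.
  apply Rmult_lt_reg_r with (INR n); [exact Hn0R|].
  rewrite Rmult_assoc, Rinv_l, Rmult_1_r by lra.
  assert (d * INR n < eps / 2 * INR n) by (apply Rmult_lt_compat_r; lra).
  lra.
Qed.

Lemma frac_affine_injective (sigma rho : R) (i j : nat) : irrational sigma -> i <> j ->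
  frac (sigma * INR i + rho) <> frac (sigma * INR j + rho).
Proof.
  intros Hs.
  assert (Hlt : forall i j, (i < j)%nat -> frac (sigma * INR i + rho) <> frac (sigma * INR j + rho)).
  { clear i j; intros i j Hij E; unfold frac, frac_part in E.
    apply (irrational_mul_neq sigma (j - i)
             (Int_part (sigma * INR j + rho) - Int_part (sigma * INR i + rho)) Hs); [lia|].
    rewrite minus_INR, minus_IZR by lia; lra. }
  intros Hij; destruct (Nat.lt_gt_cases i j) as [[Hl|Hg] _]; [exact Hij | auto |].
  intros E; apply (Hlt j i Hg); auto.
Qed.

Lemma frac_affine_double (sigma rho : R) (i k : nat) :
  frac (2 * frac (sigma * INR i + rho) - rho + INR k * sigma) = frac (sigma * INR (2 * i + k) + rho).
Proof.
  replace (2 * frac (sigma * INR i + rho) - rho + INR k * sigma)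
    with (2 * frac (sigma * INR i + rho) + (INR k * sigma - rho)) by ring.
  rewrite frac_double; f_equal; rewrite plus_INR, mult_INR; simpl; ring.
Qed.

Lemma prefix_len_const_length {A : Type} (f : nat -> list A) (c i : nat) :
  (forall i, length (f i) = c) -> prefix_len f i = (c * i)%nat.
Proof. intros Hc; induction i as [|i IH]; simpl; [lia|]; rewrite IH, Hc; lia. Qed.

Theorem mainTheorem7 (sigma rho : R) (Hsigma : irrational sigma) :
  let b := fun n : nat => frac (sigma * INR n + rho) in
  canonical b /\
  fixed_point_of_morphism
    (fun x => frac (2 * x - rho) :: frac (2 * x - rho + sigma) :: nil) b.
Proof.
  intros b; split; [split; [|split] | split].
  - intros i j Hij; now apply frac_affine_injective.
  - intros i; pose proof (frac_bounds (sigma * INR i + rho)); unfold b; lra.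
  - intros t Ht eps Heps; now apply frac_affine_equidistributed.
  - discriminate.
  - intros i k Hk; rewrite (prefix_len_const_length _ 2) by reflexivity.
    simpl in Hk; unfold b; rewrite <- frac_affine_double.
    destruct k as [|[|k]]; [| | lia]; simpl nth; f_equal; simpl; ring.
Qed.
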